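(* Let $C>0$, $\bar w\in[0,1]$, $\Psi_{\mathrm{prev}}\in[0,2]$, and let $\Psi$ be the limiter $$\Psi(r)=\max\big\{0,\ \min\{(2C+\Psi_{\mathrm{prev}})\,r,\ 1-\bar w+\bar w r,\ 2\}\big\}.$$ Suppose real numbers $Q_i^n,Q_i^{n-1},Q_{i-1}^n,Q_{i-1}^{n+1}$ satisfy the high-resolution compact inverse scheme $$Q_i^n + \tfrac12\Psi(r_i^n)\,(Q_{i-1}^{n+1}-Q_i^n) + C\,Q_i^n = Q_i^{n-1} + \tfrac12\Psi_{\mathrm{prev}}\,(Q_{i-1}^{n}-Q_i^{n-1}) + C\,Q_{i-1}^n,\qquad r_i^n=\frac{Q_{i-1}^n-Q_i^{n-1}}{Q_{i-1}^{n+1}-Q_i^n},$$ with the convention that the term $\Psi(r_i^n)(Q_{i-1}^{n+1}-Q_i^n)$ equals $0$ when $Q_{i-1}^{n+1}=Q_i^n$. Then $$\min\{Q_i^{n-1},Q_{i-1}^n\}\le Q_i^n\le \max\{Q_i^{n-1},Q_{i-1}^n\},$$ for every value of $C>0$ (no restriction on the Courant number).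
   Context: Scheme for $\kappa\partial_tq+v(t)\partial_xq=0$ on a space grid $x_i$ with steps $h_i$ and uniform time step $\tau$; $Q_i^n\approx q(x_i,t^n)$, $C=C_i^n=v^n\tau/(\kappa h_i)$ is the local Courant number, and $\Psi_{\mathrm{prev}}=\Psi(r_i^{n-1})$ is the (already computed) limiter value of the previous time level; values are computed by marching in space ($i=1,2,\dots$) and, for each $i$, in time ($n=1,2,\dots$). *)

From HB Require Import structures.
From mathcomp Require Import all_boot all_order all_algebra.
Set Implicit Arguments. Unset Strict Implicit. Unset Printing Implicit Defensive.
Import Order.TTheory GRing.Theory Num.Theory.
Local Open Scope ring_scope.

Definition limiter {R : realFieldType} (C wbar Psi_prev r : R) : R :=
  Num.max 0 (Num.min (Num.min ((2 * C + Psi_prev) * r) (1 - wbar + wbar * r)) 2).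

Definition limited_term {R : realFieldType} (C wbar Psi_prev num den : R) : R :=
  if den == 0 then 0 else limiter C wbar Psi_prev (num / den) * den.

From HB Require Import structures.
From mathcomp Require Import all_boot all_order all_algebra.
From mathcomp Require Import ring lra.
Import Order.TTheory GRing.Theory Num.Theory.
Local Open Scope ring_scope.

(* The limited term is always a multiple [k * (Q_{i-1}^n - Q_i^{n-1})] with
   [0 <= k <= 2C + Psi_prev]: the limiter vanishes for [r <= 0] and is bounded
   by the slope [(2C + Psi_prev) r] for [r > 0].  Substituting into the scheme
   gives [(1 + C) (Q_i^n - Q_i^{n-1}) = (C + (Psi_prev - k) / 2) (Q_{i-1}^n - Q_i^{n-1})],
   and [Psi_prev <= 2] makes the coefficient of the right-hand side at most
   [1 + C], so [Q_i^n] is a convex combination of [Q_i^{n-1}] and [Q_{i-1}^n]. *)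

Section Limiter.
Variables (R : realFieldType) (C wbar Psi_prev : R).
Hypothesis slope_ge0 : 0 <= 2 * C + Psi_prev.

Lemma limiter_proportional (r : R) :
  exists2 k, 0 <= k <= 2 * C + Psi_prev & limiter C wbar Psi_prev r = k * r.
Proof.
rewrite /limiter; set m := Num.min _ _.
have m_le_slope : m <= (2 * C + Psi_prev) * r by rewrite /m !ge_min lexx.
have [r_le0 | r_gt0] := lerP r 0.
  exists 0; first by rewrite lexx slope_ge0.
  by rewrite mul0r max_l // (le_trans m_le_slope) // mulr_ge0_le0.
exists (Num.max 0 m / r); last by rewrite divfK ?gt_eqF.
have max_ge0 : 0 <= Num.max 0 m by rewrite le_max lexx.
rewrite divr_ge0 ?(ltW r_gt0) //= ler_pdivrMr // ge_max m_le_slope.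
by rewrite mulr_ge0 // ltW.
Qed.

Lemma limited_term_proportional (num den : R) :
  exists2 k, 0 <= k <= 2 * C + Psi_prev &
    limited_term C wbar Psi_prev num den = k * num.
Proof.
rewrite /limited_term; have [_ | den_neq0] := eqVneq den 0.
  by exists 0; rewrite ?mul0r // lexx slope_ge0.
have [k k_bounds ->] := limiter_proportional (num / den).
by exists k; rewrite // -mulrA divfK.
Qed.

End Limiter.

Lemma convex_comb_between (R : realDomainType) (a b t : R) :
  0 <= t <= 1 -> Num.min a b <= a + t * (b - a) <= Num.max a b.
Proof.
move=> /andP[t_ge0 t_le1].
by have [a_le_b | b_lt_a] := lerP a b; apply/andP; split; nra.
Qed.

Theorem mainTheorem5 (R : realFieldType) (C wbar Psi_prev Qin Qinm1 Qim1n Qim1np1 : R) :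
  0 < C -> 0 <= wbar <= 1 -> 0 <= Psi_prev <= 2 ->
  Qin + 2^-1 * limited_term C wbar Psi_prev (Qim1n - Qinm1) (Qim1np1 - Qin) + C * Qin
    = Qinm1 + 2^-1 * Psi_prev * (Qim1n - Qinm1) + C * Qim1n ->
  Num.min Qinm1 Qim1n <= Qin <= Num.max Qinm1 Qim1n.
Proof.
move=> C_gt0 _ /andP[Psi_ge0 Psi_le2] scheme.
have slope_ge0 : 0 <= 2 * C + Psi_prev by lra.
have [k /andP[k_ge0 k_le] term_eq] :=
  @limited_term_proportional R C wbar Psi_prev slope_ge0 (Qim1n - Qinm1) (Qim1np1 - Qin).
rewrite term_eq in scheme.
have increment : (1 + C) * (Qin - Qinm1)
    = (C + (Psi_prev - k) / 2) * (Qim1n - Qinm1).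
  set lhs := Qin + _ + _ in scheme; set rhs := Qinm1 + _ + _ in scheme.
  transitivity (lhs - rhs + (C + (Psi_prev - k) / 2) * (Qim1n - Qinm1)).
    by rewrite /lhs /rhs; field.
  by rewrite scheme subrr add0r.
have C1_gt0 : 0 < 1 + C by lra.
set t := (2 * C + Psi_prev - k) / (2 * (1 + C)).
have -> : Qin = Qinm1 + t * (Qim1n - Qinm1).
  apply: (mulfI (lt0r_neq0 C1_gt0)); rewrite -[Qin](subrK Qinm1) mulrDr increment.
  by rewrite /t; field; rewrite lt0r_neq0.
apply: convex_comb_between.
rewrite /t divr_ge0 ?ler_pdivrMr /=; lra.
Qed.
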